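(* Let $G$ and $H$ be finite simple graphs, and let $u\in V(G)$, $v\in V(H)$. Then \[\mathrm{dp}_{G\times H}((u,v))=x^{\deg_G u}\,\mathrm{dp}_H(v)+x^{\deg_H v}\,\mathrm{dp}_G(u).\]
   Context: For a vertex $w$ of a simple graph $\Gamma$, the degree polynomial $\mathrm{dp}_\Gamma(w)\in\mathbb{Z}[x]$ is the polynomial in which the coefficient of $x^{i}$ is the number of neighbors of $w$ in $\Gamma$ having degree $i$ in $\Gamma$ ($\mathrm{dp}_\Gamma(w)=0$ if $w$ is isolated). The Cartesian product $G\times H$ is the simple graph on $V(G)\times V(H)$ in which $(u_1,v_1)\sim(u_2,v_2)$ if and only if either $u_1=u_2$ and $v_1\sim v_2$ in $H$, or $v_1=v_2$ and $u_1\sim u_2$ in $G$. *)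

From HB Require Import structures.
From mathcomp Require Import all_boot all_order all_algebra.
Set Implicit Arguments. Unset Strict Implicit. Unset Printing Implicit Defensive.
Import GRing.Theory.
Local Open Scope ring_scope.

Definition simple_graph (T : finType) (e : rel T) : Prop :=
  symmetric e /\ irreflexive e.

Definition deg (T : finType) (e : rel T) (w : T) : nat := #|[set y | e w y]|.

Definition dp (T : finType) (e : rel T) (w : T) : {poly int} :=
  \sum_(y in T | e w y) 'X^(deg e y).

Definition cart_rel (T1 T2 : finType) (e1 : rel T1) (e2 : rel T2) : rel (T1 * T2) :=
  fun p q => ((p.1 == q.1) && e2 p.2 q.2) || ((p.2 == q.2) && e1 p.1 q.1).

(* The neighbours of (u, v) in G x H are the (u, w) with w ~ v in H and the
   (w, v) with w ~ u in G; the two families are disjoint because u is not its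
   own neighbour.  Since deg (a, b) = deg a + deg b, the neighbour (u, w)
   contributes x^(deg u) x^(deg w) and the neighbour (w, v) contributes
   x^(deg v) x^(deg w). *)

From HB Require Import structures.
From mathcomp Require Import all_boot all_order all_algebra.
Import GRing.Theory.
Local Open Scope ring_scope.

Lemma deg_sum (T : finType) (e : rel T) w : deg e w = (\sum_(y | e w y) 1)%N.
Proof. by rewrite /deg -sum1_card; apply: eq_bigl => y; rewrite inE. Qed.

Section CartesianNeighbourhood.

Variables (T1 T2 : finType) (e1 : rel T1) (e2 : rel T2).
Hypothesis e1_irr : irreflexive e1.

Lemma cart_relE a b x y :
  cart_rel e1 e2 (a, b) (x, y) = if x == a then e2 b y else (y == b) && e1 a x.
Proof.
rewrite /cart_rel /= [a == x]eq_sym [b == y]eq_sym.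
by case: eqVneq => [->|_] /=; rewrite ?e1_irr ?andbF ?orbF.
Qed.

Lemma big_cart_nbhd (R : nmodType) a b (F : T1 * T2 -> R) :
  \sum_(p | cart_rel e1 e2 (a, b) p) F p =
  \sum_(y | e2 b y) F (a, y) + \sum_(x | e1 a x) F (x, b).
Proof.
rewrite (bigID (fun p : T1 * T2 => p.1 == a)) /=; congr (_ + _).
- rewrite -(@big_pred1_eq R 0 +%R _ a (fun x => \sum_(y | e2 b y) F (x, y))).
  rewrite (pair_big_dep (pred1 a) (fun _ => e2 b) (fun x y => F (x, y))) /=.
  apply: eq_big => -[x y] //=; rewrite cart_relE.
  by case: (x == a); rewrite ?andbT ?andbF.
- under [RHS]eq_bigr => x _ do rewrite -(@big_pred1_eq R 0 +%R _ b (fun y => F (x, y))).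
  rewrite (pair_big_dep (e1 a) (fun _ => pred1 b) (fun x y => F (x, y))) /=.
  apply: eq_big => -[x y] //=; rewrite cart_relE.
  by case: eqVneq => [->|_]; rewrite ?e1_irr ?andbF ?andbT // andbC.
Qed.

Lemma deg_cart a b : deg (cart_rel e1 e2) (a, b) = (deg e2 b + deg e1 a)%N.
Proof. by rewrite !deg_sum (@big_cart_nbhd nat _ _ (fun=> 1%N)). Qed.

End CartesianNeighbourhood.

Theorem theorem4p16 (T1 T2 : finType) (e1 : rel T1) (e2 : rel T2)
  (hG : simple_graph e1) (hH : simple_graph e2) (u : T1) (v : T2) :
  dp (cart_rel e1 e2) (u, v) = 'X^(deg e1 u) * dp e2 v + 'X^(deg e2 v) * dp e1 u.
Proof.
have e1_irr := proj2 hG.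
rewrite /dp big_cart_nbhd // !mulr_sumr.
by congr (_ + _); apply: eq_bigr => w _; rewrite deg_cart // exprD mulrC.
Qed.
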